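(* For a strictly positive probability vector $\pi=(\pi_1,\pi_2,\pi_3,\pi_4)$ let $$\mathrm{HKY}_\pi^+=\left\{\begin{pmatrix}\ast & \pi_2\kappa & \lambda\pi_3 & \lambda\pi_4\\ \pi_1\kappa & \ast & \lambda\pi_3 & \lambda\pi_4\\ \lambda\pi_1 & \lambda\pi_2 & \ast & \pi_4\kappa\\ \lambda\pi_1 & \lambda\pi_2 & \pi_3\kappa & \ast\end{pmatrix}:\kappa,\lambda\ge 0\right\},$$ where each $\ast$ denotes the diagonal entry making the row sum zero. If $\pi_1+\pi_2\neq\pi_3+\pi_4$, then $\operatorname{span}_{\mathbb{R}}(\mathrm{HKY}_\pi^+)$ is not closed under $A\odot B=AB+BA$ (so $\mathrm{HKY}_\pi^+$ is not uniformization stable). Consequently $\mathrm{HKY}^+:=\bigcup_\pi\mathrm{HKY}_\pi^+$ (union over all strictly positive probability vectors) is not uniformization stable.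
   Context: A strictly positive probability vector has all entries positive and summing to 1. A set $\mathcal{M}$ of $4\times4$ rate matrices (zero row sums, nonnegative off-diagonal entries) is uniformization stable if for every $Q\in\mathcal{M}$ and $t\ge0$ there is $\hat Q\in\mathcal{M}$ with $e^{Qt}-I_4=\hat Q$. *)

From HB Require Import structures.
From mathcomp Require Import all_boot all_order all_algebra.
From mathcomp Require Import all_classical all_reals all_analysis.
Set Implicit Arguments. Unset Strict Implicit. Unset Printing Implicit Defensive.
Import Order.TTheory GRing.Theory Num.Theory.
Import numFieldNormedType.Exports.
Local Open Scope ring_scope.
Local Open Scope classical_set_scope.

Definition strictly_pos_prob (R : realType) (pi : 'I_4 -> R) : Prop :=
  (forall i, 0 < pi i) /\ \sum_(i < 4) pi i = 1.

(* explicit indices: pi_1 = pi p1, ..., pi_4 = pi p4 *)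
Definition p1 : 'I_4 := @Ordinal 4 0 isT.
Definition p2 : 'I_4 := @Ordinal 4 1 isT.
Definition p3 : 'I_4 := @Ordinal 4 2 isT.
Definition p4 : 'I_4 := @Ordinal 4 3 isT.

(* Same transition class: {1,2} (indices 0,1) and {3,4} (indices 2,3). *)
Definition hky_same_class (i j : 'I_4) : bool := ((i < 2)%N == (j < 2)%N).

Definition hky_offdiag (R : realType) (pi : 'I_4 -> R) (kappa lambda : R)
  (i j : 'I_4) : R :=
  if hky_same_class i j then pi j * kappa else lambda * pi j.

Definition hky_mx (R : realType) (pi : 'I_4 -> R) (kappa lambda : R) : 'M[R]_4 :=
  \matrix_(i, j) (if i == j then - \sum_(k < 4 | k != i) hky_offdiag pi kappa lambda i k
                  else hky_offdiag pi kappa lambda i j).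

Definition HKYplus_pi (R : realType) (pi : 'I_4 -> R) : set 'M[R]_4 :=
  [set Q | exists kappa lambda : R, 0 <= kappa /\ 0 <= lambda /\ Q = hky_mx pi kappa lambda].

Definition HKYplus (R : realType) : set 'M[R]_4 :=
  [set Q | exists pi : 'I_4 -> R, strictly_pos_prob pi /\ HKYplus_pi pi Q].

Definition mx_span (R : realType) (M : set 'M[R]_4) : set 'M[R]_4 :=
  [set B | exists (n : nat) (c : 'I_n -> R) (A : 'I_n -> 'M[R]_4),
      (forall i, M (A i)) /\ B = \sum_(i < n) c i *: A i].

Definition odot (R : realType) (A B : 'M[R]_4) : 'M[R]_4 := A * B + B * A.

Definition closed_under_odot (R : realType) (S : set 'M[R]_4) : Prop :=
  forall A B, S A -> S B -> S (odot A B).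

Definition expmx_minus_id_is (R : realType) (X Qhat : 'M[R]_4) : Prop :=
  (series (fun k : nat => (k`!%:R)^-1 *: X ^+ k)) @ \oo --> (1 + Qhat).

Definition uniformization_stable (R : realType) (M : set 'M[R]_4) : Prop :=
  forall Q, M Q -> forall t : R, 0 <= t ->
    exists Qhat, M Qhat /\ expmx_minus_id_is (t *: Q) Qhat.

(* Write a = pi_1 + pi_2 and b = pi_3 + pi_4.  Every HKY matrix Q satisfies two
   identities in its off-diagonal entries:
   - the linear one  pi_4 Q_12 - pi_2 Q_34 = 0, which therefore holds on the whole
     real span of HKY_pi^+;
   - the quadratic, pi-independent one  Q_12 Q_13 = Q_43 Q_42, which holds on
     every member of the union HKY^+.
   Both fail for matrices built from the pure transversion matrix T = hky_mx pi 0 1: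
   - pi_4 (T (.) T)_12 - pi_2 (T (.) T)_34 = 2 pi_2 pi_4 (b - a) <> 0, so the span is
     not closed under (.);
   - T has eigenvalues 0, -(a+b), -b, -a; writing rows 1 and 4 of T^k as exponential
     sums and summing the exponential series entrywise shows that for Qhat = e^{tT} - I
     the quadratic defect Qhat_12 Qhat_13 - Qhat_43 Qhat_42 is a positive multiple of
     D(t) = (b-a) e^{-(a+b)t} - b e^{-bt} + a e^{-at}.  Since D(t) <> 0 for some t > 0
     when a <> b, e^{tT} - I lies outside HKY^+, so neither HKY_pi^+ nor HKY^+ is
     uniformization stable. *)
From HB Require Import structures.
From mathcomp Require Import all_boot all_order all_algebra.
From mathcomp Require Import all_classical all_reals all_analysis.
From mathcomp Require Import ring lra.
Import Order.TTheory GRing.Theory Num.Theory.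
Import numFieldNormedType.Exports.
Local Open Scope ring_scope.
Local Open Scope classical_set_scope.

Lemma big_ord4 (V : nmodType) (F : 'I_4 -> V) :
  \sum_(i < 4) F i = F p1 + F p2 + F p3 + F p4.
Proof.
rewrite !big_ord_recl big_ord0 addr0 !addrA.
by congr (F _ + F _ + F _ + F _); apply/val_inj.
Qed.

Lemma mx_span_kernel {R : realType} (M : set 'M[R]_4) (f : 'M[R]_4 -> R) :
  {morph f : A B / A + B} -> (forall c A, f (c *: A) = c * f A) ->
  (forall A, M A -> f A = 0) -> forall B, mx_span M B -> f B = 0.
Proof.
move=> fD fZ fM B [n [c [A [MA ->]]]].
apply: (big_ind (fun B => f B = 0)).
- by rewrite -(scale0r 0) fZ mul0r.
- by move=> B1 B2 f1 f2; rewrite fD f1 f2 addr0.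
- by move=> i _; rewrite fZ fM ?mulr0.
Qed.

(* Linear invariant of HKY_pi^+: both Q_12 / pi_2 and Q_34 / pi_4 equal kappa. *)
Lemma hky_linear_invariant {R : realType} (pi : 'I_4 -> R) (B : 'M[R]_4) :
  mx_span (HKYplus_pi pi) B -> pi p4 * B p1 p2 - pi p2 * B p3 p4 = 0.
Proof.
apply: (mx_span_kernel _ (fun A => pi p4 * A p1 p2 - pi p2 * A p3 p4)).
- by move=> A1 A2 /=; rewrite !mxE; ring.
- by move=> c A /=; rewrite !mxE; ring.
- by move=> _ [k [l [_ [_ ->]]]]; rewrite !mxE /= /hky_offdiag /=; ring.
Qed.

(* Quadratic invariant of every HKY matrix, whatever pi, kappa, lambda:
   both sides equal pi_2 pi_3 kappa lambda. *)
Lemma hky_quadratic_invariant {R : realType} (pi : 'I_4 -> R) (k l : R) :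
  let Q := hky_mx pi k l in Q p1 p2 * Q p1 p3 = Q p4 p3 * Q p4 p2.
Proof. by rewrite /= !mxE /= /hky_offdiag /=; ring. Qed.

(* The exponential sum c0 x0^k + c1 x1^k + c2 x2^k, the shape of the entries of
   the powers of a matrix with eigenvalues x0, x1, x2. *)
Definition expsum {R : pzRingType} (c0 c1 c2 x0 x1 x2 : R) (k : nat) : R :=
  c0 * x0 ^+ k + c1 * x1 ^+ k + c2 * x2 ^+ k.

Lemma expsum_series_cvg {R : realType} (t c0 c1 c2 x0 x1 x2 : R) :
  series (fun k => (k`!%:R)^-1 * (t ^+ k * expsum c0 c1 c2 x0 x1 x2 k)) @ \oo -->
    c0 * expR (t * x0) + c1 * expR (t * x1) + c2 * expR (t * x2).
Proof.
have -> : series (fun k => (k`!%:R)^-1 * (t ^+ k * expsum c0 c1 c2 x0 x1 x2 k)) =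
    (fun n => c0 * series (exp_coeff (t * x0)) n + c1 * series (exp_coeff (t * x1)) n
              + c2 * series (exp_coeff (t * x2)) n).
  apply/funext => n; rewrite /series /= !mulr_sumr -!big_split /=.
  by apply: eq_bigr => k _; rewrite /exp_coeff /expsum /= !exprMn; ring.
apply: cvgD; first apply: cvgD.
all: by apply: cvgM; [exact: cvg_cst | exact: is_cvg_series_exp_coeff].
Qed.

Lemma expmx_entry {R : realType} {X Qh : 'M[R]_4} {t : R} {i j : 'I_4}
    {c0 c1 c2 x0 x1 x2 : R} :
  expmx_minus_id_is (t *: X) Qh ->
  (forall k, (X ^+ k) i j = expsum c0 c1 c2 x0 x1 x2 k) ->
  (1 + Qh) i j = c0 * expR (t * x0) + c1 * expR (t * x1) + c2 * expR (t * x2).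
Proof.
move=> hexp hX.
have entry_cvg : ((fun M : 'M[R]_4 => M i j) \o
    series (fun k : nat => (k`!%:R)^-1 *: (t *: X) ^+ k)) @ \oo --> (1 + Qh) i j.
  by apply: continuous_cvg; [exact: coord_continuous | exact: hexp].
have entry_series :
    (fun M : 'M[R]_4 => M i j) \o series (fun k : nat => (k`!%:R)^-1 *: (t *: X) ^+ k)
    = series (fun k => (k`!%:R)^-1 * (t ^+ k * expsum c0 c1 c2 x0 x1 x2 k)).
  apply/funext => n; rewrite /series /= summxE.
  by apply: eq_bigr => k _; rewrite exprZn !mxE hX.
rewrite entry_series in entry_cvg.
have := expsum_series_cvg t c0 c1 c2 x0 x1 x2.
exact: cvg_unique entry_cvg.
Qed.

Definition defect {R : realType} (a b t : R) : R :=
  (b - a) * expR (- ((a + b) * t)) - b * expR (- (b * t)) + a * expR (- (a * t)).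

Lemma defect_sym {R : realType} (a b t : R) : defect b a t = - defect a b t.
Proof. by rewrite /defect (addrC b a); ring. Qed.

(* For 0 < x < y the faster decay wins at t = 2/x: y e^{-yt} < x e^{-xt};
   this follows from e^u >= 1 + u with u = (y - x) t. *)
Lemma expR_decay_lt {R : realType} {x y : R} : 0 < x -> x < y ->
  y * expR (- (y * (2 / x))) < x * expR (- (x * (2 / x))).
Proof.
move=> x_gt0 xy.
have -> : - (x * (2 / x)) = - (y * (2 / x)) + 2 / x * (y - x) by ring.
rewrite expRD.
have Ey_gt0 := expR_gt0 (- (y * (2 / x))).
have tangent : x + 2 * (y - x) <= x * expR (2 / x * (y - x)).
  have -> : x + 2 * (y - x) = x * (1 + 2 / x * (y - x)) by field; rewrite gt_eqF.
  by apply: ler_wpM2l; [exact: ltW | exact: expR_ge1Dx].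
set E := expR _ in Ey_gt0 tangent *; set F := expR _ in tangent *.
nra.
Qed.

Lemma defect_gt0 {R : realType} {a b : R} : 0 < a -> a < b -> 0 < defect a b (2 / a).
Proof.
move=> a_gt0 ab; rewrite /defect.
have decay := expR_decay_lt a_gt0 ab.
have : 0 < (b - a) * expR (- ((a + b) * (2 / a))) by rewrite mulr_gt0 ?expR_gt0 ?subr_gt0.
lra.
Qed.

Lemma defect_neq0 {R : realType} {a b : R} : 0 < a -> 0 < b -> a != b ->
  exists2 t, 0 < t & defect a b t != 0.
Proof.
move=> a_gt0 b_gt0; case: ltgtP => // [ab | ba] _.
- by exists (2 / a); rewrite ?divr_gt0 // gt_eqF ?defect_gt0.
- exists (2 / b); first by rewrite divr_gt0.
  by rewrite -[defect a b _]opprK -defect_sym oppr_eq0 gt_eqF ?defect_gt0.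
Qed.

Section Transversion.
Variables (R : realType) (pi : 'I_4 -> R).
Hypothesis pi_gt0 : forall i, 0 < pi i.

Local Notation a := (pi p1 + pi p2).
Local Notation b := (pi p3 + pi p4).

Lemma mass12_gt0 : 0 < a. Proof. by rewrite addr_gt0. Qed.
Lemma mass34_gt0 : 0 < b. Proof. by rewrite addr_gt0. Qed.
Lemma mass12_neq0 : a != 0. Proof. by rewrite gt_eqF ?mass12_gt0. Qed.
Lemma mass34_neq0 : b != 0. Proof. by rewrite gt_eqF ?mass34_gt0. Qed.
Lemma mass_sum_neq0 : a + b != 0.
Proof. by rewrite gt_eqF ?addr_gt0 ?mass12_gt0 ?mass34_gt0. Qed.

Definition transv : 'M[R]_4 := hky_mx pi 0 1.

Lemma transv_in_HKYplus_pi : HKYplus_pi pi transv.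
Proof. by exists 0, 1. Qed.

Lemma transvE i j : transv i j =
  if i == j then - (if (i < 2)%N then b else a)
  else if hky_same_class i j then 0 else pi j.
Proof.
rewrite /transv /hky_mx mxE; have [_ | _] := eqVneq i j; last first.
  by rewrite /hky_offdiag; case: ifP; rewrite (mulr0, mul1r).
rewrite big_mkcond big_ord4 /hky_offdiag.
by case: i => [[|[|[|[|//]]]] ?] /=; ring.
Qed.

Lemma transv_pow_row1 k :
  [/\ (transv ^+ k) p1 p1 = expsum (pi p1 / (a + b)) (pi p1 * b / (a * (a + b)))
                                   (pi p2 / a) 0 (- (a + b)) (- b) k,
      (transv ^+ k) p1 p2 = expsum (pi p2 / (a + b)) (pi p2 * b / (a * (a + b)))
                                   (- (pi p2 / a)) 0 (- (a + b)) (- b) k,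
      (transv ^+ k) p1 p3 = expsum (pi p3 / (a + b)) (- (pi p3 / (a + b)))
                                   0 0 (- (a + b)) (- b) k &
      (transv ^+ k) p1 p4 = expsum (pi p4 / (a + b)) (- (pi p4 / (a + b)))
                                   0 0 (- (a + b)) (- b) k].
Proof.
rewrite /expsum; elim: k => [|k [e1 e2 e3 e4]].
  by rewrite !expr0 !mxE /=; split; field; rewrite ?mass12_neq0 ?mass34_neq0 ?mass_sum_neq0.
rewrite exprSr -mulmxE !mxE !big_ord4 e1 e2 e3 e4 !transvE /= !exprS.
by split; field; rewrite ?mass12_neq0 ?mass34_neq0 ?mass_sum_neq0.
Qed.

Lemma transv_pow_row4 k :
  [/\ (transv ^+ k) p4 p1 = expsum (pi p1 / (a + b)) (- (pi p1 / (a + b)))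
                                   0 0 (- (a + b)) (- a) k,
      (transv ^+ k) p4 p2 = expsum (pi p2 / (a + b)) (- (pi p2 / (a + b)))
                                   0 0 (- (a + b)) (- a) k,
      (transv ^+ k) p4 p3 = expsum (pi p3 / (a + b)) (pi p3 * a / (b * (a + b)))
                                   (- (pi p3 / b)) 0 (- (a + b)) (- a) k &
      (transv ^+ k) p4 p4 = expsum (pi p4 / (a + b)) (pi p4 * a / (b * (a + b)))
                                   (pi p3 / b) 0 (- (a + b)) (- a) k].
Proof.
rewrite /expsum; elim: k => [|k [e1 e2 e3 e4]].
  by rewrite !expr0 !mxE /=; split; field; rewrite ?mass12_neq0 ?mass34_neq0 ?mass_sum_neq0.
rewrite exprSr -mulmxE !mxE !big_ord4 e1 e2 e3 e4 !transvE /= !exprS.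
by split; field; rewrite ?mass12_neq0 ?mass34_neq0 ?mass_sum_neq0.
Qed.

Lemma transv_expm_defect {t : R} {Qh : 'M[R]_4} :
  expmx_minus_id_is (t *: transv) Qh ->
  Qh p1 p2 * Qh p1 p3 - Qh p4 p3 * Qh p4 p2 =
    pi p2 * pi p3 * (1 - expR (- ((a + b) * t))) / (a * b * (a + b)) * defect a b t.
Proof.
move=> hexp.
have offdiag i j c0 c1 c2 x1 x2 : i != j ->
    (forall k, (transv ^+ k) i j = expsum c0 c1 c2 0 x1 x2 k) ->
    Qh i j = c0 + c1 * expR (x1 * t) + c2 * expR (x2 * t).
  move=> ij pow; have := expmx_entry hexp pow.
  by rewrite !mxE (negbTE ij) add0r mulr0 expR0 mulr1 ![t * _]mulrC.
have Q12 := offdiag p1 p2 _ _ _ _ _ isT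
  (fun k => let: And4 _ e _ _ := transv_pow_row1 k in e).
have Q13 := offdiag p1 p3 _ _ _ _ _ isT
  (fun k => let: And4 _ _ e _ := transv_pow_row1 k in e).
have Q42 := offdiag p4 p2 _ _ _ _ _ isT
  (fun k => let: And4 _ e _ _ := transv_pow_row4 k in e).
have Q43 := offdiag p4 p3 _ _ _ _ _ isT
  (fun k => let: And4 _ _ e _ := transv_pow_row4 k in e).
rewrite Q12 Q13 Q42 Q43 /defect !mulNr.
by field; rewrite ?mass12_neq0 ?mass34_neq0 ?mass_sum_neq0.
Qed.

Lemma not_uniformization_stable (M : set 'M[R]_4) :
  a != b -> M transv ->
  (forall Q, M Q -> Q p1 p2 * Q p1 p3 = Q p4 p3 * Q p4 p2) ->
  ~ uniformization_stable M.
Proof.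
move=> ab M_transv M_inv stable.
have [t t_gt0 defect_t] := defect_neq0 mass12_gt0 mass34_gt0 ab.
have [Qh [M_Qh hexp]] := stable transv M_transv t (ltW t_gt0).
have weight_gt0 :
    0 < pi p2 * pi p3 * (1 - expR (- ((a + b) * t))) / (a * b * (a + b)).
  have ab_gt0 : 0 < a + b := addr_gt0 mass12_gt0 mass34_gt0.
  apply: divr_gt0; last by rewrite !mulr_gt0 ?mass12_gt0 ?mass34_gt0.
  by rewrite !mulr_gt0 // subr_gt0 expR_lt1 oppr_lt0 mulr_gt0.
have := transv_expm_defect hexp; rewrite M_inv // subrr => /esym/eqP.
by rewrite mulf_eq0 (negbTE defect_t) gt_eqF.
Qed.

Lemma transv_odot :
  pi p4 * (odot transv transv) p1 p2 - pi p2 * (odot transv transv) p3 p4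
  = 2 * pi p2 * pi p4 * (b - a).
Proof. by rewrite /odot !mxE !big_ord4 !transvE /=; ring. Qed.

Lemma not_closed_under_odot : a != b -> ~ closed_under_odot (mx_span (HKYplus_pi pi)).
Proof.
move=> ab closed.
have span_transv : mx_span (HKYplus_pi pi) transv.
  exists 1%N, (fun _ => 1), (fun _ => transv); split.
    by move=> _; exact: transv_in_HKYplus_pi.
  by rewrite big_ord1 scale1r.
have := hky_linear_invariant pi _ (closed _ _ span_transv span_transv).
rewrite transv_odot => /eqP.
by rewrite !mulf_eq0 subr_eq0 (eq_sym b) (negbTE ab) !gt_eqF.
Qed.
End Transversion.

Theorem mainTheorem8 (R : realType) (pi : 'I_4 -> R) :
  strictly_pos_prob pi ->
  pi p1 + pi p2 != pi p3 + pi p4 ->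
  ~ closed_under_odot (mx_span (HKYplus_pi pi)) /\
  ~ uniformization_stable (HKYplus_pi pi) /\
  ~ uniformization_stable (@HKYplus R).
Proof.
move=> pi_prob ab; have [pi_gt0 _] := pi_prob.
split; first exact: not_closed_under_odot.
split; apply: (not_uniformization_stable _ _ pi_gt0 _ ab).
- exact: transv_in_HKYplus_pi.
- by move=> _ [k [l [_ [_ ->]]]]; exact: hky_quadratic_invariant.
- by exists pi; split; last exact: transv_in_HKYplus_pi.
- by move=> _ [pi' [_ [k [l [_ [_ ->]]]]]]; exact: hky_quadratic_invariant.
Qed.
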